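(* If $P$ is a closed term of sort $(k,l)$ then $P^\star$ has sort $(l,k)$. Moreover $P\xrightarrow[\vec b]{\vec a}R$ if and only if $P^\star\xrightarrow[\vec a^\star]{\vec b^\star}R^\star$, where $\vec a^\star$ denotes the reversal of the word $\vec a$. Consequently, for closed terms $P,Q$ of the same sort, $P\sim Q$ if and only if $P^\star\sim Q^\star$.
   Context: Wire calculus. Fix a set $\Sigma$ of signals and $\iota\notin\Sigma$; $L=\Sigma\cup\{\iota\}$; $\vec\iota$ denotes a word of $\iota$'s. Prefix strings are words over atoms: signal variables $x$, binders $\lambda x$, $\iota$, constants $\sigma\in\Sigma$. Terms: $P::= Y \mid P\mathrel{;}P\mid P\otimes P\mid \frac{u}{v}.P\mid P+P\mid \mu Y{:}\tau.P$ ($\tau$ a sort $(k,l)$). In $\frac{u}{v}.P$, variables $x$ with $\lambda x$ in $uv$ are bound (set $bd$). Sorting: $Y$ has its declared sort; $P:(k,n),R:(n,l)\Rightarrow P\mathrel{;}R:(k,l)$; $P:(k,l),Q:(m,n)\Rightarrow P\otimes Q:(k+m,l+n)$; $\frac{u}{v}.P:(|u|,|v|)$ when $P$ has that sort (free variables of $uv$ in context, disjoint from $bd$); $\mu Y{:}\tau.P:\tau$ when $P:\tau$ assuming $Y{:}\tau$; $P+Q:\tau$ for $P,Q:\tau$. Closed terms only, up to renaming of bound variables. Transitions $P\xrightarrow[\vec b]{\vec a}Q$ (upper label $\vec a$, lower label $\vec b$, words over $L$) are generated by: (Refl) $P\xrightarrow[\vec\iota]{\vec\iota}P$; ($\iota$L)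 $P\xrightarrow[\vec\iota]{\vec\iota}R\xrightarrow[\vec b]{\vec a}Q$ gives $P\xrightarrow[\vec b]{\vec a}Q$; ($\iota$R) $P\xrightarrow[\vec b]{\vec a}R\xrightarrow[\vec\iota]{\vec\iota}Q$ gives $P\xrightarrow[\vec b]{\vec a}Q$; (Cut) $P\xrightarrow[\vec c]{\vec a}Q$, $R\xrightarrow[\vec b]{\vec c}S$ give $P\mathrel{;}R\xrightarrow[\vec b]{\vec a}Q\mathrel{;}S$; (Ten) $P\xrightarrow[\vec b]{\vec a}Q$, $R\xrightarrow[\vec d]{\vec c}S$ give $P\otimes R\xrightarrow[\vec b\vec d]{\vec a\vec c}Q\otimes S$; (Pref) for each $\sigma:bd\to L$, $\frac{u}{v}.P\xrightarrow[v|_\sigma]{u|_\sigma}P|_\sigma$; (Rec) $P[\mu Y.P/Y]\xrightarrow[\vec b]{\vec a}Q$ gives $\mu Y.P\xrightarrow[\vec b]{\vec a}Q$; ($+\iota$) $P\xrightarrow[\vec\iota]{\vec\iota}Q$, $R\xrightarrow[\vec\iota]{\vec\iota}S$ give $P+R\xrightarrow[\vec\iota]{\vec\iota}Q+S$; ($+$L/R) $P\xrightarrow[\vec b]{\vec a}Q$ with $\vec a\vec b$ not all $\iota$ gives $P+R\xrightarrow[\vec b]{\vec a}Q$ and $R+P\xrightarrow[\vec b]{\vec a}Q$. Bisimilarity $\sim$: $P\sim Q$ iff some relation $S\ni(P,Q)$ satisfies: if $(P',Q')\in S$ and $P'\xrightarrow[\vec b]{\vec a}P''$ then $Q'\xrightarrow[\vec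 b]{\vec a}Q''$ with $(P'',Q'')\in S$, and symmetrically. The operation $(-)^\star$: on prefix strings it is string reversal (letters being the atoms); on terms it is defined by structural recursion: $Y^\star=Y$, $(R\mathrel{;}S)^\star=S^\star\mathrel{;}R^\star$, $(R\otimes S)^\star=S^\star\otimes R^\star$, $(\frac{u}{v}.R)^\star=\frac{v^\star}{u^\star}.R^\star$, $(R+S)^\star=R^\star+S^\star$, $(\mu Y.R)^\star=\mu Y.R^\star$. *)

From mathcomp Require Import all_boot.

Set Implicit Arguments.
Unset Strict Implicit.
Unset Printing Implicit Defensive.

(* Labels: L = Sigma + {iota}; iota is None, a signal s is Some s. *)
Definition label (Sig : Type) := option Sig.
Definition is_iota {Sig : Type} (x : label Sig) : bool :=
  if x is None then true else false.
Definition iotas {Sig : Type} (w : seq (label Sig)) : bool := all is_iota w.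

Definition svar := nat.
Definition rvar := nat.
Definition sort := (nat * nat)%type.

Inductive atom (Sig : Type) : Type :=
| AVar : svar -> atom Sig
| ALam : svar -> atom Sig
| AIota : atom Sig
| ASig : Sig -> atom Sig.
Arguments AVar {Sig}. Arguments ALam {Sig}. Arguments AIota {Sig}. Arguments ASig {Sig}.

Inductive term (Sig : Type) : Type :=
| TVar : rvar -> term Sig
| TSeq : term Sig -> term Sig -> term Sig
| TTen : term Sig -> term Sig -> term Sig
| TPre : seq (atom Sig) -> seq (atom Sig) -> term Sig -> term Sig
| TSum : term Sig -> term Sig -> term Sig
| TMu  : rvar -> sort -> term Sig -> term Sig.
Arguments TVar {Sig}.

Definition lam_vars {Sig : Type} (w : seq (atom Sig)) : seq svar :=
  flatten (map (fun a => if a is ALam x then [:: x] else [::]) w).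
Definition bd {Sig : Type} (u v : seq (atom Sig)) : seq svar := lam_vars (u ++ v).

Definition var_occs {Sig : Type} (w : seq (atom Sig)) : seq svar :=
  flatten (map (fun a => if a is AVar x then [:: x] else [::]) w).
Definition fv_prefix {Sig : Type} (u v : seq (atom Sig)) : seq svar :=
  [seq x <- var_occs (u ++ v) | x \notin bd u v].

(* Sorting judgement: Gamma = signal variables in context,
   Delta = declared sorts of recursion variables. *)
Definition rctx := rvar -> option sort.
Definition rext (D : rctx) (Y : rvar) (t : sort) : rctx :=
  fun Z => if Z == Y then Some t else D Z.

Inductive sorted {Sig : Type} : seq svar -> rctx -> term Sig -> sort -> Prop :=
| S_Var G D Y t : D Y = Some t -> sorted G D (TVar Y) t
| S_Seq G D P R k n l :
    sorted G D P (k, n) -> sorted G D R (n, l) -> sorted G D (TSeq P R) (k, l)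
| S_Ten G D P Q k l m n :
    sorted G D P (k, l) -> sorted G D Q (m, n) ->
    sorted G D (TTen P Q) (k + m, l + n)
| S_Pre G D u v P :
    {subset fv_prefix u v <= G} ->
    all (fun x => x \notin bd u v) G ->
    sorted (G ++ bd u v) D P (size u, size v) ->
    sorted G D (TPre u v P) (size u, size v)
| S_Mu G D Y t P :
    sorted G (rext D Y t) P t -> sorted G D (TMu Y t P) t
| S_Sum G D P Q t :
    sorted G D P t -> sorted G D Q t -> sorted G D (TSum P Q) t.

Definition csorted {Sig : Type} (P : term Sig) (t : sort) : Prop :=
  sorted [::] (fun _ => None) P t.

(* Substitution of labels for signal variables:  P|_sigma,
   sigma a partial map (defined exactly on the variables to replace). *)
Definition atom_of_label {Sig : Type} (l : label Sig) : atom Sig :=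
  if l is Some s then ASig s else AIota.

Definition satom {Sig : Type} (s : svar -> option (label Sig)) (a : atom Sig)
  : atom Sig :=
  match a with
  | AVar x => if s x is Some l then atom_of_label l else AVar x
  | _ => a
  end.

Definition srestrict {Sig : Type} (s : svar -> option (label Sig)) (b : seq svar)
  : svar -> option (label Sig) :=
  fun x => if x \in b then None else s x.

Fixpoint ssubst {Sig : Type} (s : svar -> option (label Sig)) (P : term Sig)
  : term Sig :=
  match P with
  | TVar Y => TVar Y
  | TSeq P1 P2 => TSeq (ssubst s P1) (ssubst s P2)
  | TTen P1 P2 => TTen (ssubst s P1) (ssubst s P2)
  | TPre u v P1 =>
      let s' := srestrict s (bd u v) in
      TPre (map (satom s') u) (map (satom s') v) (ssubst s' P1)
  | TSum P1 P2 => TSum (ssubst s P1) (ssubst s P2)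
  | TMu Y t P1 => TMu Y t (ssubst s P1)
  end.

(* u|_sigma for the prefix being fired, sigma : bd -> L given by f
   (only its values on bd matter for closed terms) *)
Definition lab_atom {Sig : Type} (f : svar -> label Sig) (a : atom Sig) : label Sig :=
  match a with
  | AVar x => f x
  | ALam x => f x
  | AIota => None
  | ASig s => Some s
  end.
Definition lab {Sig : Type} (f : svar -> label Sig) (w : seq (atom Sig))
  : seq (label Sig) := map (lab_atom f) w.

Definition sigma_on {Sig : Type} (f : svar -> label Sig) (b : seq svar)
  : svar -> option (label Sig) :=
  fun x => if x \in b then Some (f x) else None.

(* Substitution of a (closed) term N for recursion variable Y: P[N/Y] *)
Fixpoint rsubst {Sig : Type} (Y : rvar) (N : term Sig) (P : term Sig) : term Sig :=
  match P with
  | TVar Z => if Z == Y then N else TVar Z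
  | TSeq P1 P2 => TSeq (rsubst Y N P1) (rsubst Y N P2)
  | TTen P1 P2 => TTen (rsubst Y N P1) (rsubst Y N P2)
  | TPre u v P1 => TPre u v (rsubst Y N P1)
  | TSum P1 P2 => TSum (rsubst Y N P1) (rsubst Y N P2)
  | TMu Z t P1 => if Z == Y then TMu Z t P1 else TMu Z t (rsubst Y N P1)
  end.

(* Transitions  trans P a b Q  :  P --a (upper) / b (lower)--> Q *)
Inductive trans {Sig : Type} : term Sig -> seq (label Sig) -> seq (label Sig) ->
    term Sig -> Prop :=
| T_Refl P a b : iotas a -> iotas b -> trans P a b P
| T_IotaL P R Q a' b' a b :
    iotas a' -> iotas b' -> trans P a' b' R -> trans R a b Q -> trans P a b Q
| T_IotaR P R Q a' b' a b :
    iotas a' -> iotas b' -> trans P a b R -> trans R a' b' Q -> trans P a b Q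
| T_Cut P Q R S0 a b c :
    trans P a c Q -> trans R c b S0 -> trans (TSeq P R) a b (TSeq Q S0)
| T_Ten P Q R S0 a b c d :
    trans P a b Q -> trans R c d S0 -> trans (TTen P R) (a ++ c) (b ++ d) (TTen Q S0)
| T_Pre u v P (f : svar -> label Sig) :
    trans (TPre u v P) (lab f u) (lab f v) (ssubst (sigma_on f (bd u v)) P)
| T_Rec Y t P a b Q :
    trans (rsubst Y (TMu Y t P) P) a b Q -> trans (TMu Y t P) a b Q
| T_SumIota P Q R S0 a b :
    iotas a -> iotas b -> trans P a b Q -> trans R a b S0 ->
    trans (TSum P R) a b (TSum Q S0)
| T_SumL P R Q a b :
    ~~ iotas (a ++ b) -> trans P a b Q -> trans (TSum P R) a b Q
| T_SumR P R Q a b :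
    ~~ iotas (a ++ b) -> trans P a b Q -> trans (TSum R P) a b Q.

Definition bisimulation {Sig : Type} (Rel : term Sig -> term Sig -> Prop) : Prop :=
  forall P' Q', Rel P' Q' ->
    (forall a b P'', trans P' a b P'' -> exists2 Q'', trans Q' a b Q'' & Rel P'' Q'') /\
    (forall a b Q'', trans Q' a b Q'' -> exists2 P'', trans P' a b P'' & Rel P'' Q'').

Definition bisim {Sig : Type} (P Q : term Sig) : Prop :=
  exists Rel : term Sig -> term Sig -> Prop, Rel P Q /\ bisimulation Rel.

Fixpoint star {Sig : Type} (P : term Sig) : term Sig :=
  match P with
  | TVar Y => TVar Y
  | TSeq R R2 => TSeq (star R2) (star R)
  | TTen R R2 => TTen (star R2) (star R)
  | TPre u v R => TPre (rev v) (rev u) (star R)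
  | TSum R R2 => TSum (star R) (star R2)
  | TMu Y t R => TMu Y (t.2, t.1) (star R)
  end.

(* Reversing every prefix string, and swapping the two sides of every ';' and
   every tensor, is an involution on terms that commutes with both kinds of
   substitution.  It therefore mirrors each transition rule onto itself with
   upper and lower labels exchanged and reversed, which gives the transition
   correspondence; transporting a bisimulation along the involution then gives
   the statement on bisimilarity. *)
From Pilot Require Import Defs.
From mathcomp Require Import all_boot.

Set Implicit Arguments.
Unset Strict Implicit.
Unset Printing Implicit Defensive.

Lemma flatten_map_rev (A B : Type) (f : A -> seq B) (w : seq A) :
  (forall a, size (f a) <= 1) ->
  flatten (map f (rev w)) = rev (flatten (map f w)).
Proof.
move=> f_small; elim: w => [|a w IHw] //.
rewrite rev_cons -cats1 map_cat flatten_cat IHw /= cats0 rev_cat.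
by case: (f a) (f_small a) => [|x []].
Qed.

Section Star.
Variable Sig : Type.
Implicit Types (P Q R : term Sig) (u v w : seq (atom Sig)).

Lemma lam_vars_rev w : lam_vars (rev w) = rev (lam_vars w).
Proof. by apply: flatten_map_rev => -[]. Qed.

Lemma var_occs_rev w : var_occs (rev w) = rev (var_occs w).
Proof. by apply: flatten_map_rev => -[]. Qed.

Lemma bd_rev u v : bd (rev v) (rev u) = rev (bd u v).
Proof. by rewrite /bd -rev_cat lam_vars_rev. Qed.

Lemma fv_prefix_rev u v : fv_prefix (rev v) (rev u) = rev (fv_prefix u v).
Proof.
rewrite /fv_prefix bd_rev -rev_cat var_occs_rev filter_rev.
by congr rev; apply: eq_filter => x; rewrite mem_rev.
Qed.

Lemma star_sorted G D P t :
  Defs.sorted G D P t -> forall G' D', G =i G' ->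
  (forall Y, D' Y = omap (fun t => (t.2, t.1)) (D Y)) ->
  Defs.sorted G' D' (star P) (t.2, t.1).
Proof.
elim=> {G D P t}.
- by move=> G D Y t DY G' D' _ eqD /=; constructor; rewrite eqD DY.
- move=> G D P R k n l _ IHP _ IHR G' D' eqG eqD /=.
  by apply: (S_Seq (n := n)); [apply: IHR | apply: IHP].
- move=> G D P Q k l m n _ IHP _ IHQ G' D' eqG eqD /=.
  by rewrite [l + n]addnC [k + m]addnC; apply: S_Ten; [apply: IHQ | apply: IHP].
- move=> G D u v P fvG Gbd _ IHP G' D' eqG eqD /=.
  rewrite -(size_rev v) -(size_rev u); apply: S_Pre.
  + by move=> x; rewrite fv_prefix_rev mem_rev -eqG; apply: fvG.
  + by apply/allP => x; rewrite -eqG bd_rev mem_rev => /(allP Gbd).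
  + rewrite !size_rev; apply: IHP => // x.
    by rewrite !mem_cat bd_rev mem_rev eqG.
- move=> G D Y t P _ IHP G' D' eqG eqD /=.
  by apply: S_Mu; apply: IHP => // Z; rewrite /rext; case: (Z == Y).
- move=> G D P Q t _ IHP _ IHQ G' D' eqG eqD /=.
  by apply: S_Sum; [apply: IHP | apply: IHQ].
Qed.

Lemma starK : involutive (@star Sig).
Proof.
elim=> //= [P1 -> P2 -> | P1 -> P2 -> | u v P -> | P1 -> P2 -> | Y [t1 t2] P ->] //.
by rewrite !revK.
Qed.

Lemma eq_satom (s1 s2 : svar -> option (label Sig)) :
  s1 =1 s2 -> satom s1 =1 satom s2.
Proof. by move=> eq_s [] //= x; rewrite eq_s. Qed.

Lemma eq_srestrict (s1 s2 : svar -> option (label Sig)) b1 b2 :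
  s1 =1 s2 -> b1 =i b2 -> srestrict s1 b1 =1 srestrict s2 b2.
Proof. by move=> eq_s eq_b x; rewrite /srestrict eq_b eq_s. Qed.

Lemma eq_ssubst (s1 s2 : svar -> option (label Sig)) P :
  s1 =1 s2 -> ssubst s1 P = ssubst s2 P.
Proof.
elim: P s1 s2 => //= [P1 IH1 P2 IH2 | P1 IH1 P2 IH2 | u v P IHP
                     | P1 IH1 P2 IH2 | Y t P IHP] s1 s2 eq_s;
  rewrite ?(IH1 s1 s2) ?(IH2 s1 s2) ?(IHP s1 s2) //.
have eq_s' := eq_srestrict eq_s (fun x => erefl (x \in bd u v)).
by rewrite (IHP _ _ eq_s') !(eq_map (eq_satom eq_s')).
Qed.

Lemma star_ssubst s P : star (ssubst s P) = ssubst s (star P).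
Proof.
elim: P s => //= [P1 IH1 P2 IH2 | P1 IH1 P2 IH2 | u v P IHP
                 | P1 IH1 P2 IH2 | Y t P IHP] s; rewrite ?IH1 ?IH2 ?IHP //.
have rev_bd : srestrict s (bd (rev v) (rev u)) =1 srestrict s (bd u v).
  by apply: eq_srestrict => // x; rewrite bd_rev mem_rev.
by rewrite !map_rev (eq_ssubst _ rev_bd) !(eq_map (eq_satom rev_bd)).
Qed.

Lemma star_rsubst Y N P : star (rsubst Y N P) = rsubst Y (star N) (star P).
Proof.
elim: P => //= [Z | P1 -> P2 -> | P1 -> P2 -> | u v P -> | P1 -> P2 -> | Z t P IHP] //.
  by case: (Z == Y).
by case: (Z == Y); rewrite //= IHP.
Qed.

Lemma iotas_rev (a : seq (label Sig)) : iotas (rev a) = iotas a.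
Proof. exact: all_rev. Qed.

Lemma trans_star P a b R :
  trans P a b R -> trans (star P) (rev b) (rev a) (star R).
Proof.
elim=> {P a b R}.
- by move=> P a b ia ib; apply: T_Refl; rewrite iotas_rev.
- by move=> P R Q a' b' a b ia' ib' _ IH1 _ IH2; apply: T_IotaL IH1 IH2;
    rewrite iotas_rev.
- by move=> P R Q a' b' a b ia' ib' _ IH1 _ IH2; apply: T_IotaR IH1 IH2;
    rewrite iotas_rev.
- by move=> P Q R S a b c _ IH1 _ IH2 /=; apply: T_Cut IH2 IH1.
- by move=> P Q R S a b c d _ IH1 _ IH2 /=; rewrite !rev_cat; apply: T_Ten.
- move=> u v P f /=; rewrite star_ssubst /lab -!map_rev.
  have rev_bd : sigma_on f (bd (rev v) (rev u)) =1 sigma_on f (bd u v).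
    by move=> x; rewrite /sigma_on bd_rev mem_rev.
  by rewrite -(eq_ssubst _ rev_bd); apply: T_Pre.
- by move=> Y t P a b Q _; rewrite star_rsubst => /T_Rec.
- by move=> P Q R S a b ia ib _ IH1 _ IH2 /=; apply: T_SumIota;
    rewrite ?iotas_rev.
- by move=> P R Q a b nia _ IH /=; apply: T_SumL; rewrite // -rev_cat iotas_rev.
- by move=> P R Q a b nia _ IH /=; apply: T_SumR; rewrite // -rev_cat iotas_rev.
Qed.

Lemma trans_star_iff P a b R :
  trans P a b R <-> trans (star P) (rev b) (rev a) (star R).
Proof.
split; first exact: trans_star.
by move/trans_star; rewrite !starK !revK.
Qed.

Lemma bisimulation_star (Rel : term Sig -> term Sig -> Prop) :
  bisimulation Rel -> bisimulation (fun P Q => Rel (star P) (star Q)).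
Proof.
move=> bisimRel P Q /bisimRel[simPQ simQP]; split.
- move=> a b P' /trans_star /simPQ[Q' /trans_star stepQ relPQ'].
  by exists (star Q'); rewrite ?starK //; move: stepQ; rewrite starK !revK.
- move=> a b Q' /trans_star /simQP[P' /trans_star stepP relPQ'].
  by exists (star P'); rewrite ?starK //; move: stepP; rewrite starK !revK.
Qed.

Lemma bisim_star P Q : bisim P Q -> bisim (star P) (star Q).
Proof.
case=> Rel [relPQ bisimRel]; exists (fun P Q => Rel (star P) (star Q)).
by rewrite !starK; split; last exact: bisimulation_star.
Qed.

End Star.

Theorem mainTheorem8 (Sig : Type) (P : term Sig) (k l : nat) :
  csorted P (k, l) ->
  csorted (star P) (l, k) /\
  (forall (a b : seq (label Sig)) (R : term Sig),
      trans P a b R <-> trans (star P) (rev b) (rev a) (star R)) /\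
  (forall Q : term Sig, csorted Q (k, l) ->
      (bisim P Q <-> bisim (star P) (star Q))).
Proof.
move=> sortedP; split; first exact: (star_sorted sortedP).
split=> [a b R | Q _]; first exact: trans_star_iff.
split; first exact: bisim_star.
by move/bisim_star; rewrite !starK.
Qed.
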